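(* Let $\delta\ge3$ and let $K^{(\delta)}$ be a $\delta$-PHO with potential coefficients $v_h=v^{(\delta)}_h$. Put $V(q)=\tfrac12(q_1^2+q_2^2)+V^{(\delta)}(q)$. There exist real constants $(\alpha,\beta,\beta',\gamma,\gamma')\ne(0,0,0,0,0)$ such that for all $q\in\mathbb R^2$ $$\Big(\tfrac{\partial^2V}{\partial q_2^2}-\tfrac{\partial^2V}{\partial q_1^2}\Big)(-2\alpha q_1q_2-\beta'q_2-\beta q_1+\gamma)+2\tfrac{\partial^2V}{\partial q_1\partial q_2}(\alpha q_2^2-\alpha q_1^2+\beta q_2-\beta'q_1+\gamma')+\tfrac{\partial V}{\partial q_1}(6\alpha q_2+3\beta)-\tfrac{\partial V}{\partial q_2}(6\alpha q_1+3\beta')=0$$ if and only if: (I) for odd $\delta\ge5$: $\operatorname{rank}\mathcal M(K^{(\delta)})=1$; (II) for even $\delta\ge4$: either $\operatorname{rank}\mathcal M(K^{(\delta)})=1$, or $v_0\ne0$, $v_{2h}=\binom{\delta/2}{h}\binom{\delta}{2h}^{-1}v_0$ for $h=1,\dots,\delta/2$, and $v_{2h'-1}=0$ for $h'=1,\dots,\delta/2$; (III) for $\delta=3$: either $\operatorname{rank}\mathcal M(K^{(3)})=1$, or $$\operatorname{rank}\begin{pmatrix}7v_1&-v_0+6v_2&-2v_1+5v_3\\-5v_0+2v_2&-6v_1+v_3&-7v_2\end{pmatrix}=1.$$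
   Context: A $\delta$-PHO is the Hamiltonian $K^{(\delta)}(q,p)=\tfrac12\sum_{j=1}^2(p_j^2+q_j^2)+V^{(\delta)}(q)$ on $\mathbb R^4$, with $V^{(\delta)}(q)=\sum_{h=0}^{\delta}v^{(\delta)}_h\binom{\delta}{h}q_1^hq_2^{\delta-h}$, real coefficients, $V^{(\delta)}\not\equiv0$. $\mathcal M(K^{(\delta)})$ is the $2\times(\delta-1)$ real matrix whose $(h+1)$-st column, $h=0,\dots,\delta-2$, is $\big(v^{(\delta)}_h-v^{(\delta)}_{h+2},\ 2v^{(\delta)}_{h+1}\big)^T$. The displayed identity is the Bertrand–Darboux condition; by the classical Bertrand–Darboux theorem it is equivalent to the existence of a first integral quadratic in the momenta (independent of the Hamiltonian). *)

From HB Require Import structures.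
From mathcomp Require Import all_boot all_order all_algebra.
From mathcomp Require Import reals.
From mathcomp Require Import mpoly.
Set Implicit Arguments. Unset Strict Implicit. Unset Printing Implicit Defensive.
Import Order.TTheory GRing.Theory Num.Theory.
Local Open Scope ring_scope.

Definition i1 : 'I_2 := ord0.
Definition i2 : 'I_2 := ord_max.

Section PHO.
Variable R : realType.

Definition Vdelta (d : nat) (v : nat -> R) : {mpoly R[2]} :=
  \sum_(h < d.+1) (v h * 'C(d, h)%:R) *: ('X_i1 ^+ h * 'X_i2 ^+ (d - h)).

Definition Vfull (d : nat) (v : nat -> R) : {mpoly R[2]} :=
  2^-1 *: ('X_i1 ^+ 2 + 'X_i2 ^+ 2) + Vdelta d v.

Definition BD_lhs (d : nat) (v : nat -> R) (a b b' c c' : R) : {mpoly R[2]} :=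
  let V := Vfull d v in
  let q1 : {mpoly R[2]} := 'X_i1 in
  let q2 : {mpoly R[2]} := 'X_i2 in
  let V11 := (V^`M(i1))^`M(i1) in
  let V22 := (V^`M(i2))^`M(i2) in
  let V12 := (V^`M(i2))^`M(i1) in
  (V22 - V11) * ((-2 * a)%:MP * q1 * q2 - b'%:MP * q2 - b%:MP * q1 + c%:MP)
  + 2%:MP * V12 * (a%:MP * q2 ^+ 2 - a%:MP * q1 ^+ 2 + b%:MP * q2 - b'%:MP * q1 + c'%:MP)
  + V^`M(i1) * ((6 * a)%:MP * q2 + (3 * b)%:MP)
  - V^`M(i2) * ((6 * a)%:MP * q1 + (3 * b')%:MP).

Definition Mmat (d : nat) (v : nat -> R) : 'M[R]_(2, d.-1) :=
  \matrix_(i < 2, j < d.-1)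
    (if i == 0 :> nat then v j - v j.+2 else 2 * v j.+1).

Definition M3 (v : nat -> R) : 'M[R]_(2, 3) :=
  \matrix_(i < 2, j < 3)
    [fun k : nat => 0 with
       0%N |-> (if i == 0 :> nat then 7 * v 1%N else -5 * v 0%N + 2 * v 2%N),
       1%N |-> (if i == 0 :> nat then - v 0%N + 6 * v 2%N else -6 * v 1%N + v 3%N),
       2%N |-> (if i == 0 :> nat then -2 * v 1%N + 5 * v 3%N else -7 * v 2%N)] (j : nat).

End PHO.

From HB Require Import structures.
From mathcomp Require Import all_boot all_order all_algebra.
From mathcomp Require Import reals.
From mathcomp Require Import mpoly.
From mathcomp Require Import ring lra zify.
Import Order.TTheory GRing.Theory Num.Theory.
Local Open Scope ring_scope.

(* Evaluate the Bertrand-Darboux expression at t q. Since V is the harmonic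
   quadratic plus a form of degree d, the expression splits into homogeneous
   parts of degrees d, d-1, d-2 and 1, carrying alpha, (beta, beta'),
   (gamma, gamma') and (beta, beta') respectively. For d >= 4 the degrees are
   distinct and each part vanishes: beta = beta' = 0, (gamma, gamma') is a left
   null vector of M, and alpha <> 0 forces the rotational derivative
   (q2 ∂1 - q1 ∂2) V^(d) to vanish. Comparing coefficients, that is impossible
   for odd d and, for even d, means V^(d) = v_0 (q1^2 + q2^2)^(d/2).
   For d = 3 the two linear parts merge: the quadratic part says that
   (beta, beta') is a left null vector of M3, and the remaining linear equation
   in (gamma, gamma') is solvable whenever M is invertible. *)

Section BertrandDarboux.
Variable R : realType.
Set Implicit Arguments.
Unset Strict Implicit.
Implicit Types (v w : nat -> R) (x y t : R).

Lemma poly_eq0_of_horner (p : {poly R}) : (forall t, p.[t] = 0) -> p = 0.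
Proof.
move=> p0; apply: (@roots_geq_poly_eq0 _ p [seq i%:R | i <- iota 0 (size p)]).
- by apply/allP=> x _; rewrite /root p0.
- by rewrite map_inj_uniq ?iota_uniq // => i j /eqP; rewrite eqr_nat => /eqP.
- by rewrite size_map size_iota.
Qed.

Lemma bin_neq0 n k : (k <= n)%N -> ('C(n, k)%:R : R) != 0.
Proof. by move=> kn; rewrite pnatr_eq0 -lt0n bin_gt0. Qed.

(** * Binary forms *)

Definition binform n w x y : R :=
  \sum_(k < n.+1) (w k * 'C(n, k)%:R) * (x ^+ k * y ^+ (n - k)).

Lemma meval_Vdelta n w (q : 'I_2 -> R) :
  (Vdelta n w).@[q] = binform n w (q i1) (q i2).
Proof.
rewrite /Vdelta /binform (big_morph _ (mevalD q) (meval0 q)).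
by apply: eq_bigr => k _; rewrite mevalZ mevalM !rmorphXn /= !mevalXU.
Qed.

Lemma binform_eq0 n w x y :
  (forall k, (k <= n)%N -> w k = 0) -> binform n w x y = 0.
Proof. by move=> w0; apply: big1 => k _; rewrite w0 ?mul0r // -ltnS. Qed.

Lemma binform_homo n w t x y :
  binform n w (t * x) (t * y) = t ^+ n * binform n w x y.
Proof.
rewrite /binform mulr_sumr; apply: eq_bigr => k _.
have -> : t ^+ n = t ^+ k * t ^+ (n - k) by rewrite -exprD subnKC // -ltnS.
rewrite !exprMn; ring.
Qed.

Lemma binform_horner n w x :
  binform n w x 1 = (\poly_(k < n.+1) (w k * 'C(n, k)%:R)).[x].
Proof. by rewrite horner_poly; apply: eq_bigr => k _; rewrite expr1n mulr1. Qed.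

Lemma binform_coef_eq0 n w :
  (forall x, binform n w x 1 = 0) -> forall k, (k <= n)%N -> w k = 0.
Proof.
move=> w0 k kn.
have /polyP/(_ k) : \poly_(k < n.+1) (w k * 'C(n, k)%:R) = 0.
  by apply: poly_eq0_of_horner => t; rewrite -binform_horner w0.
rewrite coef_poly coef0 ltnS kn => /eqP.
by rewrite mulf_eq0 (negbTE (bin_neq0 kn)) orbF => /eqP.
Qed.

Lemma binform_y0 n w x : binform n w x 0 = w n * x ^+ n.
Proof.
rewrite /binform big_ord_recr /= subnn expr0 mulr1 binn mulr1 big1 ?add0r //.
by move=> k _; rewrite expr0n subn_eq0 leqNgt ltn_ord /= !mulr0.
Qed.

Lemma binformS n w x y :
  binform n.+1 w x y = x * binform n (fun k => w k.+1) x y + y * binform n w x y.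
Proof.
rewrite /binform big_ord_recl /=.
under eq_bigr => k _ do rewrite /bump /= add1n binS natrD mulrDr mulrDl.
rewrite big_split /= addrA addrC mulr_sumr; congr (_ + _).
  by apply: eq_bigr => k _; rewrite subSS exprS; ring.
have -> : w 0%N * 'C(n.+1, 0)%:R * (x ^+ 0 * y ^+ (n.+1 - 0)) +
    \sum_(i < n.+1) w i.+1 * 'C(n, i.+1)%:R * (x ^+ i.+1 * y ^+ (n.+1 - i.+1))
  = \sum_(i < n.+2) w i * 'C(n, i)%:R * (x ^+ i * y ^+ (n.+1 - i)).
  by rewrite [in RHS]big_ord_recl /= !bin0.
rewrite big_ord_recr /= bin_small // mulr0 mul0r addr0 mulr_sumr.
by apply: eq_bigr => k _; rewrite subSn ?leq_ord // exprS; ring.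
Qed.

Lemma i2_i1F : (i2 == i1) = false. Proof. by []. Qed.
Lemma i1_i2F : (i1 == i2) = false. Proof. by []. Qed.

Lemma mderiv_var (i j : 'I_2) : ('X_i : {mpoly R[2]})^`M(j) = (i == j)%:R%:MP.
Proof.
rewrite mderivX mnm1E; case: eqP => [->|_]; last by rewrite scale0r.
have -> : (U_(j) - U_(j) = 0)%MM by apply/mnmP=> k; rewrite !mnmE subnn.
by rewrite mpolyX0 scale1r.
Qed.

Lemma mderiv_varX (i j : 'I_2) n :
  (('X_i : {mpoly R[2]}) ^+ n)^`M(j) = ((i == j) * n)%:R *: 'X_i ^+ n.-1.
Proof.
elim: n => [|n IH]; first by rewrite expr0 mderivC muln0 scale0r.
rewrite exprS mderivM IH mderiv_var; case: n IH => [|n] IH.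
  by rewrite muln0 scale0r mulr0 addr0 expr0 mulr1 muln1 /= -mul_mpolyC mulr1.
by rewrite mul_mpolyC -scalerAr -exprS -scalerDl -natrD -mulnS.
Qed.

Lemma mderiv1_Vdelta n w :
  (Vdelta n.+1 w)^`M(i1) = n.+1%:R *: Vdelta n (fun k => w k.+1).
Proof.
rewrite /Vdelta linear_sum big_ord_recl /= scaler_sumr mderivZ mderivM.
rewrite !mderiv_varX i2_i1F eqxx !mul0n !muln0 !scale0r mul0r mulr0 addr0.
rewrite scaler0 add0r; apply: eq_bigr => k _.
rewrite mderivZ mderivM !mderiv_varX i2_i1F eqxx mul0n scale0r mulr0 addr0.
rewrite mul1n /= -scalerAl !scalerA subSS /bump /= add1n; congr (_ *: _).
have := congr1 (fun i : nat => i%:R : R) (mul_bin_diag n.+1 k); rewrite !natrM /= => e.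
by rewrite -mulrA [_ * k.+1%:R]mulrC -e; ring.
Qed.

Lemma mderiv2_Vdelta n w : (Vdelta n.+1 w)^`M(i2) = n.+1%:R *: Vdelta n w.
Proof.
rewrite /Vdelta linear_sum big_ord_recr /= scaler_sumr mderivZ mderivM.
rewrite !mderiv_varX i1_i2F eqxx !mul0n subnn !muln0 !scale0r mulr0 addr0.
rewrite mul0r scaler0 addr0; apply: eq_bigr => k _.
rewrite mderivZ mderivM !mderiv_varX i1_i2F eqxx mul0n scale0r mul0r add0r.
rewrite mul1n /= -scalerAr !scalerA; congr (_ *: _); last by rewrite subSn ?leq_ord.
have := congr1 (fun i : nat => i%:R : R) (mul_bin_down n.+1 k); rewrite !natrM /= => e.
by rewrite -mulrA [_ * (n.+1 - k)%:R]mulrC -e; ring.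
Qed.

Lemma mderiv1_Vfull m v :
  (Vfull m.+2 v)^`M(i1) = 'X_i1 + m.+2%:R *: Vdelta m.+1 (fun k => v k.+1).
Proof.
rewrite /Vfull mderivD mderivZ mderivD !mderiv_varX mderiv1_Vdelta i2_i1F.
by rewrite eqxx mul0n scale0r addr0 /= expr1 scalerA mulVf ?pnatr_eq0 ?scale1r.
Qed.

Lemma mderiv2_Vfull m v :
  (Vfull m.+2 v)^`M(i2) = 'X_i2 + m.+2%:R *: Vdelta m.+1 v.
Proof.
rewrite /Vfull mderivD mderivZ mderivD !mderiv_varX mderiv2_Vdelta i1_i2F.
by rewrite eqxx mul0n scale0r add0r /= expr1 scalerA mulVf ?pnatr_eq0 ?scale1r.
Qed.

Lemma mderiv11_Vfull m v : (Vfull m.+2 v)^`M(i1)^`M(i1) =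
  1 + (m.+2 * m.+1)%:R *: Vdelta m (fun k => v k.+2).
Proof.
by rewrite mderiv1_Vfull mderivD mderivZ mderiv_var mderiv1_Vdelta scalerA natrM.
Qed.

Lemma mderiv22_Vfull m v : (Vfull m.+2 v)^`M(i2)^`M(i2) =
  1 + (m.+2 * m.+1)%:R *: Vdelta m v.
Proof.
by rewrite mderiv2_Vfull mderivD mderivZ mderiv_var mderiv2_Vdelta scalerA natrM.
Qed.

Lemma mderiv21_Vfull m v : (Vfull m.+2 v)^`M(i2)^`M(i1) =
  (m.+2 * m.+1)%:R *: Vdelta m (fun k => v k.+1).
Proof.
rewrite mderiv2_Vfull mderivD mderivZ mderiv_var mderiv1_Vdelta i2_i1F add0r.
by rewrite scalerA natrM.
Qed.

(** * Homogeneous parts of the Bertrand-Darboux expression *)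

Definition bd_value m v (a b b' c c' x y : R) : R :=
  let d := m.+2%:R in
  let V1 := d * binform m.+1 (fun k => v k.+1) x y in
  let V2 := d * binform m.+1 v x y in
  let V11 := d * m.+1%:R * binform m (fun k => v k.+2) x y in
  let V12 := d * m.+1%:R * binform m (fun k => v k.+1) x y in
  let V22 := d * m.+1%:R * binform m v x y in
  (V22 - V11) * (- 2 * a * x * y - b' * y - b * x + c)
  + 2 * V12 * (a * y ^+ 2 - a * x ^+ 2 + b * y - b' * x + c')
  + (x + V1) * (6 * a * y + 3 * b) - (y + V2) * (6 * a * x + 3 * b').

Lemma meval_BD_lhs m v a b b' c c' (q : 'I_2 -> R) :
  (BD_lhs m.+2 v a b b' c c').@[q] = bd_value m v a b b' c c' (q i1) (q i2).
Proof.
rewrite /BD_lhs mderiv11_Vfull mderiv22_Vfull mderiv21_Vfull.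
rewrite mderiv1_Vfull mderiv2_Vfull /bd_value.
rewrite !(mevalD, mevalB, mevalM, mevalZ, mevalC, mevalXU, mevalN, meval1).
by rewrite !(meval_Vdelta, rmorphXn, natrM) /=; ring.
Qed.

(* (q2 ∂1 - q1 ∂2) V^(m + 2), divided by m + 2. *)
Definition rot_form m v x y : R :=
  y * binform m.+1 (fun k => v k.+1) x y - x * binform m.+1 v x y.

Definition Mcomb v (c c' : R) k : R := c * (v k - v k.+2) + 2 * c' * v k.+1.

Definition bd_top m v x y : R := 2 * m.+2%:R * m.+4%:R * rot_form m v x y.

Definition bd_mid m v (b b' x y : R) : R :=
  let d := m.+2%:R in
  let V1 := d * binform m.+1 (fun k => v k.+1) x y in
  let V2 := d * binform m.+1 v x y in
  let V11 := d * m.+1%:R * binform m (fun k => v k.+2) x y in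
  let V12 := d * m.+1%:R * binform m (fun k => v k.+1) x y in
  let V22 := d * m.+1%:R * binform m v x y in
  (V22 - V11) * (- b' * y - b * x) + 2 * V12 * (b * y - b' * x)
  + 3 * b * V1 - 3 * b' * V2.

Definition bd_low m v (c c' x y : R) : R :=
  m.+2%:R * m.+1%:R * binform m (Mcomb v c c') x y.

Lemma binform_Mcomb m v c c' x y : binform m (Mcomb v c c') x y =
  c * binform m v x y - c * binform m (fun k => v k.+2) x y
  + 2 * c' * binform m (fun k => v k.+1) x y.
Proof.
rewrite /binform /Mcomb !mulr_sumr -sumrB -big_split /=.
by apply: eq_bigr => k _; ring.
Qed.

Lemma bd_value_homo m v a b b' c c' t x y :
  bd_value m v a b b' c c' (t * x) (t * y) =
    t ^+ m.+2 * (a * bd_top m v x y) + t ^+ m.+1 * bd_mid m v b b' x y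
    + t ^+ m * bd_low m v c c' x y + t * (3 * b * x - 3 * b' * y).
Proof.
rewrite /bd_value /bd_top /bd_mid /bd_low /rot_form binform_Mcomb.
by rewrite !binformS /= !binform_homo !exprS; ring.
Qed.

Lemma bd_valueE m v a b b' c c' x y : bd_value m v a b b' c c' x y =
  a * bd_top m v x y + bd_mid m v b b' x y + bd_low m v c c' x y
  + (3 * b * x - 3 * b' * y).
Proof. by have := bd_value_homo m v a b b' c c' 1 x y; rewrite !mul1r !expr1n !mul1r. Qed.

Lemma bd_mid0 m v x y : bd_mid m v 0 0 x y = 0.
Proof. by rewrite /bd_mid; ring. Qed.

Lemma bd_low_eq0 m v c c' x y :
  (forall k, (k <= m)%N -> Mcomb v c c' k = 0) -> bd_low m v c c' x y = 0.
Proof. by move=> Mc0; rewrite /bd_low binform_eq0 ?mulr0. Qed.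

Lemma bd_low_coef_eq0 m v c c' :
  (forall x, bd_low m v c c' x 1 = 0) -> forall k, (k <= m)%N -> Mcomb v c c' k = 0.
Proof.
move=> low0; apply: binform_coef_eq0 => x.
by move: (low0 x) => /eqP; rewrite !mulf_eq0 !pnatr_eq0 => /eqP.
Qed.

Lemma coef_power_sum m (al be ga la : R) :
  (forall t, t ^+ m.+2 * al + t ^+ m.+1 * be + t ^+ m * ga + t * la = 0) ->
  forall k, al * (k == m.+2)%:R + be * (k == m.+1)%:R + ga * (k == m)%:R
            + la * (k == 1)%:R = 0.
Proof.
move=> sum0 k.
have : al *: 'X^(m.+2) + be *: 'X^(m.+1) + ga *: 'X^m + la *: 'X = 0 :> {poly R}.
  apply: poly_eq0_of_horner => t.
  by rewrite !hornerD !hornerZ !hornerXn hornerX -[RHS](sum0 t); ring.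
by move/polyP/(_ k); rewrite !coefD !coefZ !coefXn coefX coef0.
Qed.

Lemma power_sum_eq0 m (al be ga la : R) : (2 <= m)%N ->
  (forall t, t ^+ m.+2 * al + t ^+ m.+1 * be + t ^+ m * ga + t * la = 0) ->
  [/\ al = 0, be = 0, ga = 0 & la = 0].
Proof.
move=> m2 /coef_power_sum coef0.
have indicatorF i j : (i != j)%N -> (i == j)%:R = 0 :> R by move/negbTE->.
move: (coef0 m.+2) (coef0 m.+1) (coef0 m) (coef0 1%N).
rewrite !eqxx !indicatorF; try lia.
by move=> /= *; split; lra.
Qed.

Lemma power_sum3_eq0 (al be ga la : R) :
  (forall t, t ^+ 3 * al + t ^+ 2 * be + t ^+ 1 * ga + t * la = 0) ->
  [/\ al = 0, be = 0 & ga + la = 0].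
Proof.
move=> /coef_power_sum coef0.
by move: (coef0 3%N) (coef0 2%N) (coef0 1%N) => /= *; split; lra.
Qed.

(** * Two-row matrices of rank one *)

Lemma ord2_cases (k : 'I_2) : k = i1 \/ k = i2.
Proof. by case: k => [[|[|n]] kn]; [left|right|]; try apply/val_inj. Qed.

Lemma big_ord2 (F : 'I_2 -> R) : \sum_(k < 2) F k = F i1 + F i2.
Proof. by rewrite !big_ord_recl big_ord0 addr0; congr (_ + F _); apply/val_inj. Qed.

Definition row2 (c c' : R) : 'rV[R]_2 := \row_k (if k == i1 then c else c').

Lemma row2_mul p (A : 'M[R]_(2, p)) c c' j :
  (row2 c c' *m A) ord0 j = c * A i1 j + c' * A i2 j.
Proof. by rewrite mxE big_ord2 !mxE eqxx. Qed.

Lemma row2_eq0 c c' : (row2 c c' == 0) = ((c, c') == (0, 0)).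
Proof.
apply/eqP/eqP => [r0|[-> ->]]; last by apply/rowP => k; rewrite !mxE; case: ifP.
have := congr1 (fun r : 'rV[R]_2 => r ord0 i1) r0.
have := congr1 (fun r : 'rV[R]_2 => r ord0 i2) r0.
by rewrite !mxE eqxx /= => -> ->.
Qed.

Lemma rank_row2_eq1P p (A : 'M[R]_(2, p)) : A != 0 ->
  (\rank A = 1%N <-> exists c c' : R, (c, c') != (0, 0) /\
     forall j, c * A i1 j + c' * A i2 j = 0).
Proof.
move=> A0; split => [rk1|[c [c' [cc0 Ac0]]]].
  have ker0 : kermx A != 0 by rewrite -mxrank_eq0 mxrank_ker rk1.
  have [i ri] : exists i, row i (kermx A) != 0.
    case: (boolP (row i1 (kermx A) == 0)) => [/eqP r1|r1]; last by exists i1.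
    case: (boolP (row i2 (kermx A) == 0)) => [/eqP r2|r2]; last by exists i2.
    move: ker0 => /eqP []; apply/row_matrixP => k.
    by rewrite row0; case: (ord2_cases k) => ->.
  set r := row i (kermx A) in ri.
  have rA : r *m A = 0 by rewrite /r -row_mul mulmx_ker row0.
  exists (r ord0 i1), (r ord0 i2); split.
    apply: contra ri => /eqP [r1 r2]; apply/eqP/rowP => k.
    by case: (ord2_cases k) => ->; rewrite [RHS]mxE.
  move=> j; have := congr1 (fun r : 'rV[R]_p => r ord0 j) rA.
  by rewrite [RHS]mxE mxE big_ord2.
have : (row2 c c' <= kermx A)%MS.
  by apply/sub_kermxP/rowP => j; rewrite row2_mul Ac0 mxE.
move/mxrankS; rewrite rank_rV row2_eq0 cc0 mxrank_ker => rk.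
have : \rank A != 0%N by rewrite mxrank_eq0.
by have := rank_leq_row A; lia.
Qed.

Lemma rank2_row2_surj (A : 'M[R]_2) r r' : \rank A = 2%N ->
  exists c c', c * A i1 i1 + c' * A i2 i1 = r /\ c * A i1 i2 + c' * A i2 i2 = r'.
Proof.
move=> rk2; have uA : A \in unitmx by rewrite -row_free_unit /row_free rk2.
pose s := row2 r r' *m invmx A; have sA : s *m A = row2 r r' by rewrite mulmxKV.
clearbody s; exists (s ord0 i1), (s ord0 i2).
have := congr1 (fun u : 'rV[R]_2 => u ord0 i2) sA.
have := congr1 (fun u : 'rV[R]_2 => u ord0 i1) sA.
by rewrite !mxE !big_ord2 eqxx.
Qed.

Lemma binform1E w x y : binform 1 w x y = w 0%N * y + w 1%N * x.
Proof. by rewrite /binform !big_ord_recr big_ord0 /= bin0 binn subn0 subnn; ring. Qed.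

Lemma binform2E w x y :
  binform 2 w x y = w 0%N * y ^+ 2 + 2 * w 1%N * x * y + w 2%N * x ^+ 2.
Proof.
rewrite /binform !big_ord_recr big_ord0 /= bin0 binn subn0 subnn.
by rewrite (_ : 'C(2, 1) = 2%N) // (_ : (2 - 1 = 1)%N) //; ring.
Qed.

Definition Mmat_dependent m v := exists c c' : R, (c, c') != (0, 0) /\
  forall k, (k <= m)%N -> Mcomb v c c' k = 0.

Lemma rank_Mmat_eq1P m v : Mmat m.+2 v != 0 ->
  (\rank (Mmat m.+2 v) = 1%N <-> Mmat_dependent m v).
Proof.
move=> M0; rewrite rank_row2_eq1P //.
split=> [[c [c' [cc0 Mc0]]]|[c [c' [cc0 Mc0]]]]; exists c, c'; split=> //.
  move=> k km; have := Mc0 (Ordinal (km : (k < m.+2.-1)%N)).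
  by rewrite !mxE /= /Mcomb => <-; ring.
by move=> j; rewrite !mxE /=; have := Mc0 j (ltn_ord j); rewrite /Mcomb => <-; ring.
Qed.

Lemma Mmat_neq0 m v :
  (0 < m)%N -> ~ (forall k, (k <= m.+2)%N -> v k = 0) -> Mmat m.+2 v != 0.
Proof.
move=> m0 vNZ; apply/eqP => M0; apply: vNZ.
have col0 j : (j <= m)%N -> v j = v j.+2 /\ v j.+1 = 0.
  move=> jm; pose J := Ordinal (jm : (j < m.+2.-1)%N).
  have := congr1 (fun A : 'M[R]_(2, m.+2.-1) => A i1 J) M0.
  have := congr1 (fun A : 'M[R]_(2, m.+2.-1) => A i2 J) M0.
  rewrite !mxE /= => /eqP; rewrite mulf_eq0 pnatr_eq0 /= => /eqP vj1.
  by move/eqP; rewrite subr_eq0 => /eqP.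
case=> [|k] km; first by rewrite (col0 0%N isT).1; case: (col0 1%N m0).
have [kLm|mLk] := leqP k m; first by case: (col0 k kLm).
have -> : k.+1 = m.+2 by lia.
by rewrite -(col0 m (leqnn _)).1 -(prednK m0); case: (col0 m.-1 (leq_pred _)).
Qed.

Definition M3comb v (b b' : R) (j : nat) : R :=
  b * M3 v i1 (inord j) + b' * M3 v i2 (inord j).

Definition M3_dependent v := exists b b' : R, (b, b') != (0, 0) /\
  forall j, (j <= 2)%N -> M3comb v b b' j = 0.

Lemma rank_M3_eq1P v : M3 v != 0 -> (\rank (M3 v) = 1%N <-> M3_dependent v).
Proof.
move=> M0; rewrite rank_row2_eq1P //.
split=> [[b [b' [bb0 Mb0]]]|[b [b' [bb0 Mb0]]]]; exists b, b'; split=> //.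
  by move=> j j2; apply: Mb0.
by move=> j; rewrite -(inord_val j); apply: Mb0; rewrite -ltnS.
Qed.

Lemma M3_neq0 v : ~ (forall k, (k <= 3)%N -> v k = 0) -> M3 v != 0.
Proof.
move=> vNZ; apply/eqP => M0; apply: vNZ.
have entry0 i j : M3 v i j = 0 by rewrite M0 mxE.
move: (entry0 i1 (inord 0)) (entry0 i2 (inord 0)) (entry0 i1 (inord 2)).
move: (entry0 i2 (inord 2)); rewrite !mxE !inordK //= => e22 e12 e20 e10.
by case=> [|[|[|[|k]]]] //=; lra.
Qed.

Lemma bd_mid_cubic v b b' x y :
  bd_mid 1 v b b' x y = 3 * binform 2 (M3comb v b b') x y.
Proof.
by rewrite /bd_mid /M3comb /= !binform1E !binform2E !mxE !inordK //=; ring.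
Qed.

(** * The rotational derivative *)

Definition rot_poly m v : {poly R} :=
  \poly_(k < m.+2) (v k.+1 * 'C(m.+1, k)%:R)
  - 'X * \poly_(k < m.+2) (v k * 'C(m.+1, k)%:R).

Lemma rot_form_homo m v t x y :
  rot_form m v (t * x) (t * y) = t ^+ m.+2 * rot_form m v x y.
Proof. by rewrite /rot_form !binform_homo !exprS; ring. Qed.

Lemma rot_form_horner m v x : rot_form m v x 1 = (rot_poly m v).[x].
Proof.
by rewrite /rot_form /rot_poly hornerD hornerN hornerM hornerX -!binform_horner mul1r.
Qed.

Lemma coef_rot_poly m v k : (rot_poly m v)`_k =
  (if (k < m.+2)%N then v k.+1 * 'C(m.+1, k)%:R else 0)
  - (if k == 0%N then 0
     else if (k.-1 < m.+2)%N then v k.-1 * 'C(m.+1, k.-1)%:R else 0).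
Proof. by rewrite coefB coefXM !coef_poly. Qed.

Lemma rot_poly_eq0_top m v : rot_poly m v = 0 -> v m.+1 = 0.
Proof.
move/polyP/(_ m.+2); rewrite coef_rot_poly coef0 ltnn /= ltnSn binn mulr1 sub0r.
by move/eqP; rewrite oppr_eq0 => /eqP.
Qed.

Lemma rot_poly_eq0_v1 m v : rot_poly m v = 0 -> v 1%N = 0.
Proof.
by move/polyP/(_ 0%N); rewrite coef_rot_poly coef0 /= bin0 mulr1 subr0.
Qed.

Lemma rot_form_eq0P m v : (forall x y, rot_form m v x y = 0) <-> rot_poly m v = 0.
Proof.
split=> [rot0|rot0 x y].
  by apply: poly_eq0_of_horner => t; rewrite -rot_form_horner.
have [->|y0] := eqVneq y 0.
  by rewrite /rot_form !binform_y0 (rot_poly_eq0_top rot0) !mul0r mulr0 subrr.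
rewrite -[x](divfK y0) -[y in rot_form _ _ _ y]mul1r !(mulrC _ y) rot_form_homo.
by rewrite rot_form_horner rot0 horner0 mulr0.
Qed.

(* The recursion v_(k+2) C(m+1, k+1) = v_k C(m+1, k) read off the coefficients. *)
Lemma rot_poly_eq0_step m v k :
  rot_poly m v = 0 -> (k <= m)%N -> (v k.+2 == 0) = (v k == 0).
Proof.
move=> rot0 km; have := congr1 (fun p : {poly R} => p`_k.+1) rot0.
rewrite coef_rot_poly coef0 /= !ltnS km (leq_trans km) // => /eqP.
rewrite subr_eq0 => /eqP e.
have C1 : ('C(m.+1, k.+1)%:R : R) != 0 by apply: bin_neq0.
have C0 : ('C(m.+1, k)%:R : R) != 0 by apply: bin_neq0; lia.
by rewrite -[LHS]orbF -(negbTE C1) -mulf_eq0 e mulf_eq0 (negbTE C0) orbF.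
Qed.

Lemma rot_poly_eq0_vanish m v :
  rot_poly m v = 0 -> v 0%N = 0 -> forall k, (k <= m.+2)%N -> v k = 0.
Proof.
move=> rot0 v0; have v1 := rot_poly_eq0_v1 rot0.
elim/ltn_ind=> -[|[|k]] // IH km.
by apply/eqP; rewrite (rot_poly_eq0_step rot0) //; apply/eqP/IH => //; lia.
Qed.

Lemma rot_poly_eq0_odd m v : odd m -> rot_poly m v = 0 -> v 0%N = 0.
Proof.
move=> odd_m rot0.
have even j : (j.*2 <= m.+1)%N -> (v j.*2 == 0) = (v 0%N == 0).
  by elim: j => [//|j IH jm]; rewrite doubleS (rot_poly_eq0_step rot0) ?IH //; lia.
have [p mp] : exists p, m.+1 = p.*2.
  by exists m.+1./2; rewrite -{1}(odd_double_half m.+1) /= odd_m.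
by apply/eqP; rewrite -(even p) -mp ?rot_poly_eq0_top.
Qed.

Lemma rot_poly_neq0 m v :
  odd m -> ~ (forall k, (k <= m.+2)%N -> v k = 0) -> rot_poly m v != 0.
Proof.
move=> odd_m vNZ; apply/eqP => rot0; apply: vNZ.
exact: rot_poly_eq0_vanish rot0 (rot_poly_eq0_odd odd_m rot0).
Qed.

(** * Radial potentials *)

(* The coefficients of (x^2 + y^2)^(M + 1) as a binary form of degree 2 M + 2. *)
Definition radial_coef M k : R :=
  if odd k then 0 else 'C(M.+1, k./2)%:R / 'C(M.*2.+2, k)%:R.

Lemma radial_coef_odd M k : odd k -> radial_coef M k = 0.
Proof. by rewrite /radial_coef => ->. Qed.

Lemma radial_coef_even M h :
  radial_coef M h.*2 = 'C(M.+1, h)%:R / 'C(M.*2.+2, h.*2)%:R.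
Proof. by rewrite /radial_coef odd_double half_double. Qed.

Lemma radial_coef0 M : radial_coef M 0 = 1.
Proof. by rewrite (radial_coef_even M 0) !bin0 divr1. Qed.

Lemma bin_radial_step M h : (h <= M)%N ->
  'C(M.*2.+1, h.*2.+1)%:R * radial_coef M h.+1.*2
  = 'C(M.*2.+1, h.*2)%:R * radial_coef M h.*2 :> R.
Proof.
move=> hM; rewrite !radial_coef_even.
have natr_eq i j : i = j -> i%:R = j%:R :> R by move->.
move: (natr_eq _ _ (mul_bin_diag M.*2.+2 h.*2.+1)).
move: (natr_eq _ _ (mul_bin_down M.*2.+2 h.*2)) (natr_eq _ _ (mul_bin_left M.+1 h)).
rewrite !natrM !natrB /=; try lia; move=> e2 e3 e1.
have D : (M.*2.+2%:R : R) != 0 by rewrite pnatr_eq0.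
have H1 : (h.+1%:R : R) != 0 by rewrite pnatr_eq0.
rewrite doubleS.
have -> : 'C(M.*2.+1, h.*2.+1)%:R
    = h.*2.+2%:R * 'C(M.*2.+2, h.*2.+2)%:R / M.*2.+2%:R :> R.
  by rewrite -e1 mulrC mulKf.
have -> : 'C(M.*2.+1, h.*2)%:R
    = (M.*2.+2%:R - h.*2%:R) * 'C(M.*2.+2, h.*2)%:R / M.*2.+2%:R :> R.
  by rewrite -e2 mulrC mulKf.
have -> : 'C(M.+1, h.+1)%:R = (M.+1%:R - h%:R) * 'C(M.+1, h)%:R / h.+1%:R :> R.
  by rewrite -e3 mulrC mulKf.
rewrite -!mul2n !mulrS !natrM; field.
rewrite !bin_neq0 /=; try lia.
have := ler0n R M; have := ler0n R h; move=> h0 M0.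
by rewrite !lt0r_neq0 //; lra.
Qed.

Lemma rot_poly_radial M : rot_poly M.*2 (radial_coef M) = 0.
Proof.
apply/polyP => k; rewrite coef_rot_poly coef0.
have [odd_k|even_k] := boolP (odd k).
  rewrite -(odd_double_half k) odd_k; move: k./2 => h /=.
  have [hM|Mh] := leqP h M; last by rewrite !ifF ?subrr //; lia.
  rewrite !ifT; try lia.
  by rewrite -doubleS ![_ * 'C(_, _)%:R]mulrC bin_radial_step // subrr.
rewrite -(odd_double_half k) (negbTE even_k); move: k./2 => [|h] /=.
  by rewrite radial_coef_odd ?mul0r ?if_same ?subrr.
by rewrite !radial_coef_odd ?mul0r ?if_same ?subrr //= odd_double.
Qed.

Lemma rot_polyB m v w :
  rot_poly m (fun k => v k - w k) = rot_poly m v - rot_poly m w.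
Proof.
apply/polyP => k; rewrite [RHS]coefB !coef_rot_poly.
by case: ifP => _; case: eqP => _; rewrite ?subr0 //; try case: ifP => _; ring.
Qed.

Lemma rot_polyZ m c v : rot_poly m (fun k => c * v k) = c *: rot_poly m v.
Proof.
apply/polyP => k; rewrite coefZ !coef_rot_poly.
by case: ifP => _; case: eqP => _; rewrite ?mulr0 ?subr0 //; try case: ifP => _; ring.
Qed.

Lemma eq_rot_poly m v w :
  (forall k, (k <= m.+2)%N -> v k = w k) -> rot_poly m v = rot_poly m w.
Proof.
move=> vw; apply/polyP => k; rewrite !coef_rot_poly.
case: ifP => k1; [rewrite vw //|]; case: eqP => k2 //;
  by case: ifP => k3 //; rewrite vw //; lia.
Qed.

Lemma rot_poly_eq0_radial M v :
  rot_poly M.*2 v = 0 -> forall k, (k <= M.*2.+2)%N -> v k = v 0%N * radial_coef M k.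
Proof.
move=> rot0; have : rot_poly M.*2 (fun k => v k - v 0%N * radial_coef M k) = 0.
  by rewrite rot_polyB rot_polyZ rot0 rot_poly_radial scaler0 subr0.
move/rot_poly_eq0_vanish => vanish k kM; apply/eqP; rewrite -subr_eq0; apply/eqP.
by apply: vanish; rewrite ?radial_coef0 ?mulr1 ?subrr.
Qed.

Lemma rot_poly_eq0P M v : ~ (forall k, (k <= M.*2.+2)%N -> v k = 0) ->
  (rot_poly M.*2 v = 0 <->
   [/\ v 0%N != 0,
       (forall h : nat, (1 <= h <= M.*2.+2./2)%N ->
          v (2 * h)%N = 'C(M.*2.+2./2, h)%:R / 'C(M.*2.+2, 2 * h)%:R * v 0%N)
     & (forall h' : nat, (1 <= h' <= M.*2.+2./2)%N -> v (2 * h').-1 = 0)]).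
Proof.
move=> vNZ; have half_d : M.*2.+2./2 = M.+1 by rewrite -doubleS half_double.
rewrite half_d; split=> [rot0|[v0 v_even v_odd]].
  have radial := rot_poly_eq0_radial rot0.
  split.
  - by apply: contra_notN vNZ => /eqP v0 k kM; rewrite (radial k kM) v0 mul0r.
  - move=> h /andP [h1 hM]; rewrite radial; last lia.
    by rewrite mul2n radial_coef_even mulrC.
  - move=> [|h] // /andP [_ hM]; rewrite radial; last lia.
    by rewrite radial_coef_odd ?mulr0 // mul2n doubleS /= odd_double.
rewrite (@eq_rot_poly _ _ (fun k => v 0%N * radial_coef M k)).
  by rewrite rot_polyZ rot_poly_radial scaler0.
move=> k; rewrite -[k]odd_double_half; case: (odd k); move: k./2 => [|h] /= kM.
- by rewrite (v_odd 1%N) ?radial_coef_odd ?mulr0.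
- have -> : (1 + h.+1.*2 = (2 * h.+2).-1)%N by lia.
  rewrite v_odd; last lia.
  by rewrite radial_coef_odd ?mulr0 // mul2n doubleS /= odd_double.
- by rewrite radial_coef0 mulr1.
- by rewrite -mul2n v_even ?mul2n ?radial_coef_even 1?mulrC //; lia.
Qed.

Definition bd_solvable m v := exists a b b' c c' : R,
  (a, b, b', c, c') != (0, 0, 0, 0, 0) /\
  forall x y, bd_value m v a b b' c c' x y = 0.

Lemma bd_solvableE m v :
  (exists a b b' c c' : R, (a, b, b', c, c') != (0, 0, 0, 0, 0) /\
     forall q : 'I_2 -> R, (BD_lhs m.+2 v a b b' c c').@[q] = 0)
  <-> bd_solvable m v.
Proof.
split=> -[a [b [b' [c [c' [nz BD0]]]]]]; exists a, b, b', c, c'; split=> //.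
  by move=> x y; have := BD0 (fun i => if i == i1 then x else y); rewrite meval_BD_lhs.
by move=> q; rewrite meval_BD_lhs.
Qed.

Lemma Mmat_dependent_bd_solvable m v : Mmat_dependent m v -> bd_solvable m v.
Proof.
move=> [c [c' [cc0 Mc0]]]; exists 0, 0, 0, c, c'; split.
  by apply: contra cc0; rewrite !xpair_eqE eqxx.
by move=> x y; rewrite bd_valueE bd_mid0 bd_low_eq0 //; ring.
Qed.

Lemma rot_poly_eq0_bd_solvable m v : rot_poly m v = 0 -> bd_solvable m v.
Proof.
move=> rot0; exists 1, 0, 0, 0, 0; split; first by rewrite !xpair_eqE oner_eq0.
move=> x y; rewrite bd_valueE bd_mid0 bd_low_eq0 /bd_top.
  by rewrite (proj2 (rot_form_eq0P m v) rot0); ring.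
by move=> k _; rewrite /Mcomb; ring.
Qed.

Lemma bd_value_eq0_homo m v a b b' c c' x y :
  (forall x y, bd_value m v a b b' c c' x y = 0) ->
  forall t, t ^+ m.+2 * (a * bd_top m v x y) + t ^+ m.+1 * bd_mid m v b b' x y
    + t ^+ m * bd_low m v c c' x y + t * (3 * b * x - 3 * b' * y) = 0.
Proof. by move=> BD0 t; rewrite -bd_value_homo BD0. Qed.

Lemma bd_top_eq0 m v a :
  a != 0 -> (forall x y, a * bd_top m v x y = 0) -> rot_poly m v = 0.
Proof.
move=> a0 top0; apply/rot_form_eq0P => x y; move: (top0 x y) => /eqP.
by rewrite /bd_top !mulf_eq0 (negbTE a0) !pnatr_eq0 => /eqP.
Qed.

(* For d >= 4 the four homogeneous parts have distinct degrees. *)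
Lemma bd_solvable_ge4 m v : (2 <= m)%N ->
  bd_solvable m v -> Mmat_dependent m v \/ rot_poly m v = 0.
Proof.
move=> m2 [a [b [b' [c [c' [nz BD0]]]]]].
have parts x y := power_sum_eq0 m2 (bd_value_eq0_homo x y BD0).
have b0 : b = 0 by case: (parts 1 0); lra.
have b'0 : b' = 0 by case: (parts 0 1); lra.
have [a0|a0] := eqVneq a 0; last first.
  by right; apply: bd_top_eq0 a0 _ => x y; case: (parts x y).
left; exists c, c'; split; first by apply: contra nz => /eqP [-> ->]; rewrite a0 b0 b'0.
by apply: bd_low_coef_eq0 => x; case: (parts x 1).
Qed.

Lemma bd_solvable_odd m v : odd m -> (2 <= m)%N ->
  ~ (forall k, (k <= m.+2)%N -> v k = 0) ->
  (bd_solvable m v <-> Mmat_dependent m v).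
Proof.
move=> odd_m m2 vNZ; split; last exact: Mmat_dependent_bd_solvable.
by case/(bd_solvable_ge4 m2) => // rot0; case/eqP: (rot_poly_neq0 odd_m vNZ).
Qed.

Lemma bd_solvable_even M v : (1 <= M)%N ->
  (bd_solvable M.*2 v <-> Mmat_dependent M.*2 v \/ rot_poly M.*2 v = 0).
Proof.
move=> M1; split=> [|[]]; last exact: rot_poly_eq0_bd_solvable.
- by apply: bd_solvable_ge4; lia.
- exact: Mmat_dependent_bd_solvable.
Qed.

(* For d = 3 the parts of degree d - 2 and 1 merge. *)
Lemma bd_solvable_cubic_dependent v : ~ (forall k, (k <= 3)%N -> v k = 0) ->
  bd_solvable 1 v -> Mmat_dependent 1 v \/ M3_dependent v.
Proof.
move=> vNZ [a [b [b' [c [c' [nz BD0]]]]]].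
have parts x y := power_sum3_eq0 (bd_value_eq0_homo x y BD0).
have a0 : a = 0.
  have [//|a0] := eqVneq a 0; case/eqP: (rot_poly_neq0 (m := 1) isT vNZ).
  by apply: bd_top_eq0 a0 _ => x y; case: (parts x y).
have [[b0 b'0]|bb0] := eqVneq (b, b') (0, 0).
  left; exists c, c'; split; first by apply: contra nz => /eqP [-> ->]; rewrite a0 b0 b'0.
  apply: bd_low_coef_eq0 => x; case: (parts x 1) => _ _.
  by rewrite b0 b'0 !(mul0r, mulr0) subr0 addr0.
right; exists b, b'; split=> //.
apply: binform_coef_eq0 => x; case: (parts x 1) => _ /eqP.
by rewrite bd_mid_cubic mulf_eq0 pnatr_eq0 => /eqP.
Qed.

Lemma M3_dependent_bd_solvable v : ~ (forall k, (k <= 3)%N -> v k = 0) ->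
  M3_dependent v -> bd_solvable 1 v.
Proof.
move=> vNZ [b [b' [bb0 Mb0]]].
have M0 := Mmat_neq0 (m := 1) isT vNZ.
have [/(rank_Mmat_eq1P M0)|rk1] := eqVneq (\rank (Mmat 3 v)) 1%N.
  exact: Mmat_dependent_bd_solvable.
have rk2 : \rank (Mmat 3 v) = 2%N.
  by have := rank_leq_row (Mmat 3 v); move: M0; rewrite -mxrank_eq0; lia.
have [c [c' []]] := rank2_row2_surj (b' / 2) (- b / 2) rk2.
rewrite !mxE /= => col0 col1.
have Mc0 : Mcomb v c c' 0 = b' / 2 by rewrite -col0 /Mcomb; ring.
have Mc1 : Mcomb v c c' 1 = - b / 2 by rewrite -col1 /Mcomb; ring.
exists 0, b, b', c, c'; split; first by apply: contra bb0 => /eqP [-> -> _ _].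
move=> x y; rewrite bd_valueE bd_mid_cubic binform_eq0 //.
by rewrite /bd_low binform1E Mc0 Mc1; field.
Qed.

Lemma bd_solvable_cubic v : ~ (forall k, (k <= 3)%N -> v k = 0) ->
  (bd_solvable 1 v <-> Mmat_dependent 1 v \/ M3_dependent v).
Proof.
move=> vNZ; split; first exact: bd_solvable_cubic_dependent.
by case=> [|/(M3_dependent_bd_solvable vNZ)] //; apply: Mmat_dependent_bd_solvable.
Qed.

End BertrandDarboux.

Theorem mainTheorem2 (R : realType) (d : nat) (v : nat -> R) :
  (3 <= d)%N ->
  (exists q : 'I_2 -> R, (Vdelta d v).@[q] != 0) ->
  let BD := exists a b b' c c' : R,
      (a, b, b', c, c') != (0, 0, 0, 0, 0) /\
      forall q : 'I_2 -> R, (BD_lhs d v a b b' c c').@[q] = 0 in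
  [/\ (odd d -> (5 <= d)%N -> (BD <-> \rank (Mmat d v) = 1%N)),
      (~~ odd d -> (4 <= d)%N ->
        (BD <-> \rank (Mmat d v) = 1%N \/
           [/\ v 0%N != 0,
               (forall h : nat, (1 <= h <= d./2)%N ->
                  v (2 * h)%N = 'C(d./2, h)%:R / 'C(d, 2 * h)%:R * v 0%N)
             & (forall h' : nat, (1 <= h' <= d./2)%N -> v (2 * h').-1 = 0)]))
    & (d = 3%N -> (BD <-> \rank (Mmat d v) = 1%N \/ \rank (M3 v) = 1%N))].
Proof.
move=> d3 [q Vq0] BD.
have [m dm] : exists m, d = m.+2 by exists d.-2; lia.
subst d.
have vNZ : ~ (forall k, (k <= m.+2)%N -> v k = 0).
  by move=> v0; move: Vq0; rewrite meval_Vdelta binform_eq0 ?eqxx.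
have rkM : \rank (Mmat m.+2 v) = 1%N <-> Mmat_dependent m v.
  by apply/rank_Mmat_eq1P/Mmat_neq0 => //; lia.
have BDE : BD <-> bd_solvable m v by exact: bd_solvableE.
split=> [/= /negPn odd_m m3 | /= /negPn even_m m2 | [m1]]; rewrite BDE.
- by rewrite rkM bd_solvable_odd //; lia.
- have [M mM] : exists M, m = M.*2.
    by exists m./2; rewrite -[m in LHS]odd_double_half (negbTE even_m).
  subst m; rewrite rkM -(rot_poly_eq0P vNZ); apply: bd_solvable_even; lia.
- subst m; rewrite rkM (rank_M3_eq1P (M3_neq0 vNZ)); exact: bd_solvable_cubic.
Qed.
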